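(* Let $G=(V,E)$ be a fixed finite simple graph, $\Gamma$ a nonempty family of walks on $G$, and $1<p<\infty$. Define $F(\sigma):=\mathrm{Mod}_p(\Gamma;\sigma)$ for weights $\sigma:E\to(0,\infty)$, and let $\rho^*_\sigma$ be the unique extremal density for $\mathrm{Mod}_p(\Gamma;\sigma)$. Then for every $\sigma$ and every direction $\eta:E\to\mathbb{R}$, $$\lim_{h\to0^+}\frac{F(\sigma+h\eta)-F(\sigma)}{h}=\sum_{e\in E}\eta(e)\rho^*_\sigma(e)^p;$$ in particular $\dfrac{\partial F(\sigma)}{\partial\sigma(e)}=\rho^*_\sigma(e)^p$ for every $e\in E$.
   Context: $G=(V,E)$ is a finite simple graph (directed or undirected). A walk is a string of edges $e_1\dots e_r$, $r\ge1$, $e_i=(v_i,v_{i+1})\in E$, with $\rho$-length $\ell_\rho(\gamma)=\sum_i\rho(e_i)$ for $\rho:E\to\mathbb{R}$. $A(\Gamma)=\{\rho:E\to\mathbb{R}:\rho\ge0,\ \ell_\rho(\gamma)\ge1\ \forall\gamma\in\Gamma\}$. For weights $\sigma:E\to(0,\infty)$, $\mathcal{E}_p(\rho;\sigma)=\sum_e\sigma(e)|\rho(e)|^p$ and $\mathrm{Mod}_p(\Gamma;\sigma)=\inf_{\rho\in A(\Gamma)}\mathcal{E}_p(\rho;\sigma)$; the extremal density is the unique minimizer in $A(\Gamma)$ (for $1<p<\infty$). *)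

From mathcomp Require Import ssreflect ssrbool ssrfun eqtype ssrnat seq choice fintype.
From Stdlib Require Import Reals ClassicalEpsilon.
Set Implicit Arguments. Unset Strict Implicit.
Open Scope R_scope.

(* A finite graph with vertex set V and edge set E (both finite).
   [trav e u v] means: edge e may be traversed from u to v, i.e. e = (u,v).
   For a directed simple graph take E = {(u,v) | adj u v}, trav e u v := (e == (u,v));
   for an undirected one E = {{u,v} | adj u v}, trav e u v := adj u v && (e == {u,v}). *)

Fixpoint walk_from (V E : Type) (trav : E -> V -> V -> bool) (u : V) (s : seq E) : Prop :=
  match s with
  | [::] => True
  | e :: s' => exists v, trav e u v /\ walk_from trav v s'
  end.

Definition is_walk (V E : Type) (trav : E -> V -> V -> bool) (s : seq E) : Prop :=
  s <> [::] /\ exists u : V, walk_from trav u s.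

Definition sumE (E : finType) (f : E -> R) : R :=
  foldr (fun e acc => f e + acc) 0 (enum E).

Definition rho_len (E : Type) (rho : E -> R) (g : seq E) : R :=
  foldr (fun e acc => rho e + acc) 0 g.

Definition admissible (E : Type) (Gamma : seq E -> Prop) (rho : E -> R) : Prop :=
  (forall e, 0 <= rho e) /\ (forall g, Gamma g -> 1 <= rho_len rho g).

Definition rpow (x p : R) : R := if Rle_dec x 0 then 0 else Rpower x p.

Definition energy (E : finType) (p : R) (sigma rho : E -> R) : R :=
  sumE (fun e => sigma e * rpow (Rabs (rho e)) p).

Definition is_glb (S : R -> Prop) (m : R) : Prop :=
  (forall x, S x -> m <= x) /\ (forall y, (forall x, S x -> y <= x) -> y <= m).

Definition Mod (E : finType) (Gamma : seq E -> Prop) (p : R) (sigma : E -> R) : R :=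
  epsilon (inhabits 0)
    (is_glb (fun x => exists rho, admissible Gamma rho /\ x = energy p sigma rho)).

(* the extremal density: a minimizer in A(Gamma) (unique for 1 < p < oo) *)
Definition extremal (E : finType) (Gamma : seq E -> Prop) (p : R) (sigma : E -> R) : E -> R :=
  epsilon (inhabits (fun _ => 0))
    (fun rho => admissible Gamma rho /\ energy p sigma rho = Mod Gamma p sigma).

(* The p-energy E_p(rho; sigma) is linear in sigma, so sigma |-> Mod_p(sigma) is an
   infimum of linear functions, and comparing with the extremal densities of sigma and
   sigma + h eta gives the envelope bounds
     h E_p(rho*_{sigma + h eta}; eta) <= Mod_p(sigma + h eta) - Mod_p(sigma)
                                      <= h E_p(rho*_sigma; eta).
   It remains to see that rho*_{sigma + h eta} -> rho*_sigma as h -> 0.  For small h the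
   density rho*_{sigma + h eta} is a near-minimizer for sigma, and near-minimizers are close
   to each other: the midpoint of two admissible densities is admissible, so the energy
   excess controls the midpoint convexity gap of t |-> t^p, which is bounded below on
   compact sets away from the diagonal.  The same uniform convexity makes minimizing
   sequences Cauchy, which yields the extremal density in the first place. *)

From mathcomp Require Import ssreflect ssrbool ssrfun eqtype ssrnat seq choice fintype.
From Stdlib Require Import Reals Lra ClassicalEpsilon FunctionalExtensionality Classical.
From Coquelicot Require Derive.
Open Scope R_scope.

Lemma rpow_ge0 x p : 0 <= rpow x p.
Proof. by rewrite /rpow; case: (Rle_dec x 0) => ? /=; [lra | left; apply: exp_pos]. Qed.

Lemma rpow_pos x p : 0 < x -> rpow x p = Rpower x p.
Proof. by move=> Hx; rewrite /rpow; case: (Rle_dec x 0) => //= ?; lra. Qed.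

Lemma rpow_nonpos x p : x <= 0 -> rpow x p = 0.
Proof. by move=> Hx; rewrite /rpow; case: (Rle_dec x 0). Qed.

Lemma rpow_lt x y p : 0 < p -> 0 <= x < y -> rpow x p < rpow y p.
Proof.
  move=> Hp [Hx Hxy]; rewrite (rpow_pos y); last lra.
  have [->|Hx0] := Req_dec x 0; last by rewrite rpow_pos; [apply: Rlt_Rpower_l|]; lra.
  by rewrite rpow_nonpos; [apply: exp_pos | lra].
Qed.

Lemma rpow_le_self x p : 1 <= p -> 0 <= x <= 1 -> rpow x p <= x.
Proof.
  move=> Hp [Hx0 Hx1]; have [->|Hx] := Req_dec x 0; first by rewrite rpow_nonpos; lra.
  rewrite rpow_pos /Rpower; last lra.
  have [->|Hx1'] := Req_dec x 1; first by rewrite ln_1 Rmult_0_r exp_0; lra.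
  have Hln : ln x < 0 by rewrite -ln_1; apply: ln_increasing; lra.
  rewrite -{2}(exp_ln x); last lra.
  have : p * ln x <= ln x by nra.
  by case/Rle_lt_or_eq_dec => [/exp_increasing|->]; lra.
Qed.

Lemma le_add1_rpow x p : 1 <= p -> 0 <= x -> x <= 1 + rpow x p.
Proof.
  move=> Hp Hx; have := rpow_ge0 x p; case: (Rle_dec x 1) => Hx1; first lra.
  rewrite rpow_pos; last lra.
  have : Rpower x 1 <= Rpower x p by apply: Rle_Rpower; lra.
  rewrite Rpower_1; lra.
Qed.

Lemma continuity_pt_rpow p x : 1 <= p -> continuity_pt (fun y => rpow y p) x.
Proof.
  move=> Hp; have [Hx|[->|Hx]] := Rtotal_order x 0.
  - apply: (continuity_pt_locally_ext (fun _ => 0) _ (- x)); first lra.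
      move=> y /Rabs_def2 Hy; rewrite rpow_nonpos //; lra.
    exact: continuity_pt_const.
  - move=> eps Heps; exists (Rmin 1 eps); split; first by apply: Rmin_pos; lra.
    move=> y [_ Hy]; rewrite /= /R_dist !Rminus_0_r in Hy *.
    move: (Rmin_l 1 eps) (Rmin_r 1 eps) Hy => Hm1 Hm2 /Rabs_def2 Hy.
    rewrite (rpow_nonpos 0) ?Rminus_0_r; last lra.
    rewrite Rabs_pos_eq; last exact: rpow_ge0.
    case: (Rle_dec y 0) => Hy0; first by rewrite rpow_nonpos //; lra.
    have : rpow y p <= y by apply: rpow_le_self; lra.
    lra.
  - apply: (continuity_pt_locally_ext (fun y => Rpower y p) _ x); first lra.
      by move=> y /Rabs_def2 Hy; rewrite rpow_pos //; lra.
    apply: derivable_continuous_pt; exists (p * Rpower x (p - 1)).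
    exact: derivable_pt_lim_power.
Qed.

Lemma derivable_pt_lim_rpow p x : 0 < x ->
  derivable_pt_lim (fun t => rpow t p) x (p * rpow x (p - 1)).
Proof.
  move=> Hx; rewrite rpow_pos //.
  apply: (derivable_pt_lim_locally_ext (fun t => Rpower t p) _ x 0 (2 * x)); first lra.
    by move=> y Hy; rewrite rpow_pos //; lra.
  exact: derivable_pt_lim_power.
Qed.

Definition midpoint_gap p a b := (rpow a p + rpow b p) / 2 - rpow ((a + b) / 2) p.

Lemma midpoint_gap_sym p a b : midpoint_gap p a b = midpoint_gap p b a.
Proof. by rewrite /midpoint_gap (Rplus_comm a) (Rplus_comm (rpow a p)). Qed.

Lemma midpoint_gap_diag p a : midpoint_gap p a a = 0.
Proof. by rewrite /midpoint_gap (_ : (a + a) / 2 = a); [lra | field]. Qed.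

Lemma continuity_pt_midpoint_gap p f g x : 1 <= p ->
  continuity_pt f x -> continuity_pt g x ->
  continuity_pt (fun y => midpoint_gap p (f y) (g y)) x.
Proof.
  move=> Hp Hf Hg.
  have Hpow h : continuity_pt h x -> continuity_pt (fun y => rpow (h y) p) x.
    by move=> Hh; apply: (continuity_pt_comp h (fun z => rpow z p)) => //; exact: continuity_pt_rpow.
  have Hhalf h : continuity_pt h x -> continuity_pt (fun y => h y / 2) x.
    by move=> Hh; apply: (continuity_pt_mult h (fun _ => / 2)) => //; exact: continuity_pt_const.
  have Hplus h k : continuity_pt h x -> continuity_pt k x -> continuity_pt (fun y => h y + k y) x.
    exact: continuity_pt_plus.
  apply: (continuity_pt_minus (fun y => (rpow (f y) p + rpow (g y) p) / 2)); auto.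
Qed.

Lemma derivable_pt_lim_midpoint_gap p a b : 0 <= b < a ->
  derivable_pt_lim (fun t => midpoint_gap p t b) a
    (p / 2 * (rpow a (p - 1) - rpow ((a + b) / 2) (p - 1))).
Proof.
  move=> Hab.
  have Dmean h l c : derivable_pt_lim h a l -> derivable_pt_lim (fun t => (h t + c) / 2) a (l / 2).
    move=> Dh; have := derivable_pt_lim_mult (fun t => h t + c) (fun _ => / 2) a l 0.
    rewrite Rmult_0_r Rplus_0_r; apply; last exact: derivable_pt_lim_const.
    have := derivable_pt_lim_plus h (fun _ => c) a l 0 Dh (derivable_pt_lim_const c a).
    by rewrite Rplus_0_r.
  have D1 := Dmean _ _ (rpow b p) (derivable_pt_lim_rpow p a ltac:(lra)).
  have D2 := derivable_pt_lim_comp _ _ _ _ _ (Dmean id 1 b (derivable_pt_lim_id a))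
               (derivable_pt_lim_rpow p ((a + b) / 2) ltac:(lra)).
  have -> : p / 2 * (rpow a (p - 1) - rpow ((a + b) / 2) (p - 1))
          = p * rpow a (p - 1) / 2 - p * rpow ((a + b) / 2) (p - 1) * (1 / 2) by field.
  exact: (derivable_pt_lim_minus _ _ _ _ _ D1 D2).
Qed.

Lemma midpoint_gap_mvt p a1 a2 b : 1 < p -> 0 <= b <= a1 -> a1 < a2 ->
  exists c, a1 <= c <= a2 /\ midpoint_gap p a2 b - midpoint_gap p a1 b
      = p / 2 * (rpow c (p - 1) - rpow ((c + b) / 2) (p - 1)) * (a2 - a1).
Proof.
  move=> Hp Hb Ha.
  have := Derive.MVT_gen (fun t => midpoint_gap p t b) a1 a2
    (fun c => p / 2 * (rpow c (p - 1) - rpow ((c + b) / 2) (p - 1))).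
  rewrite Rmin_left ?Rmax_right; try lra.
  apply=> x Hx.
  - by apply/Derive.is_derive_Reals/derivable_pt_lim_midpoint_gap; lra.
  - apply: (continuity_pt_midpoint_gap p (fun t => t) (fun _ => b)); first lra.
      exact: derivable_continuous_pt (derivable_pt_id x).
    exact: continuity_pt_const.
Qed.

Lemma midpoint_gap_le p a1 a2 b : 1 < p -> 0 <= b <= a1 -> a1 <= a2 ->
  midpoint_gap p a1 b <= midpoint_gap p a2 b.
Proof.
  move=> Hp Hb /Rle_lt_or_eq_dec [Ha|->]; last lra.
  have [c [Hc Heq]] := midpoint_gap_mvt _ _ _ _ Hp Hb Ha.
  have : rpow ((c + b) / 2) (p - 1) <= rpow c (p - 1).
    have [Hcb|<-] := Rle_lt_or_eq_dec b c ltac:(lra); first by left; apply: rpow_lt; lra.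
    by rewrite (_ : (b + b) / 2 = b); [lra | field].
  move=> HY; suff : 0 <= p / 2 * (rpow c (p - 1) - rpow ((c + b) / 2) (p - 1)) * (a2 - a1) by lra.
  by apply: Rmult_le_pos; [apply: Rmult_le_pos|]; lra.
Qed.

Lemma midpoint_gap_lt p a1 a2 b : 1 < p -> 0 <= b < a1 -> a1 < a2 ->
  midpoint_gap p a1 b < midpoint_gap p a2 b.
Proof.
  move=> Hp Hb Ha; have [c [Hc Heq]] := midpoint_gap_mvt _ _ _ _ Hp (conj Hb.1 (Rlt_le _ _ Hb.2)) Ha.
  have : rpow ((c + b) / 2) (p - 1) < rpow c (p - 1) by apply: rpow_lt; lra.
  move=> HY; suff : 0 < p / 2 * (rpow c (p - 1) - rpow ((c + b) / 2) (p - 1)) * (a2 - a1) by lra.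
  by apply: Rmult_lt_0_compat; [apply: Rmult_lt_0_compat|]; lra.
Qed.

Lemma midpoint_gap_pos p a b : 1 < p -> 0 <= b < a -> 0 < midpoint_gap p a b.
Proof.
  move=> Hp Hab; rewrite -(midpoint_gap_diag p b).
  apply: (Rle_lt_trans _ (midpoint_gap p ((a + b) / 2) b)).
    apply: midpoint_gap_le; lra.
  apply: midpoint_gap_lt; lra.
Qed.

Lemma midpoint_gap_ge0 p a b : 1 < p -> 0 <= a -> 0 <= b -> 0 <= midpoint_gap p a b.
Proof.
  move=> Hp Ha Hb; have [Hlt|[->|Hgt]] := Rtotal_order a b.
  - by rewrite midpoint_gap_sym; left; apply: midpoint_gap_pos; lra.
  - by rewrite midpoint_gap_diag; lra.
  - by left; apply: midpoint_gap_pos; lra.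
Qed.

Lemma midpoint_gap_uniform p K eps : 1 < p -> 0 <= K -> 0 < eps ->
  exists d, 0 < d /\ forall a b, 0 <= a <= K -> 0 <= b <= K ->
    eps <= Rabs (a - b) -> d <= midpoint_gap p a b.
Proof.
  move=> Hp HK He.
  (* the gap grows in [a] for [a >= b], so it suffices to minimize [b |-> gap (b + eps) b] *)
  have Hcont c : 0 <= c <= K -> continuity_pt (fun b => midpoint_gap p (b + eps) b) c.
    move=> _; have Hid := derivable_continuous_pt _ _ (derivable_pt_id c).
    apply: (continuity_pt_midpoint_gap p (fun b => b + eps) (fun b => b)) => //; first lra.
    by apply: (continuity_pt_plus (fun b => b) (fun _ => eps)) => //; exact: continuity_pt_const.
  have [m [Hmin Hm]] := continuity_ab_min _ 0 K HK Hcont.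
  exists (midpoint_gap p (m + eps) m); split; first by apply: midpoint_gap_pos; lra.
  have Hone a b : 0 <= b <= K -> b + eps <= a -> midpoint_gap p (m + eps) m <= midpoint_gap p a b.
    move=> Hb Hab; apply: (Rle_trans _ _ _ (Hmin b Hb)); apply: midpoint_gap_le; lra.
  move=> a b Ha Hb; have [Hba|Hab] := Rle_dec b a.
  - by rewrite Rabs_pos_eq; [move=> ?; apply: Hone; lra | lra].
  - rewrite (midpoint_gap_sym p a b) Rabs_minus_sym Rabs_pos_eq; last lra.
    by move=> ?; apply: Hone; lra.
Qed.

Definition sum_seq (T : Type) (s : seq T) (f : T -> R) : R :=
  foldr (fun x acc => f x + acc) 0 s.
Arguments sum_seq {T} s f.

Section SumSeq.
Context {T : Type} (s : seq T).

Lemma sum_seq_ext f g : (forall x, f x = g x) -> sum_seq s f = sum_seq s g.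
Proof. by move=> Hfg; elim: s => //= x s' ->; rewrite Hfg. Qed.

Lemma sum_seq_add f g : sum_seq s (fun x => f x + g x) = sum_seq s f + sum_seq s g.
Proof. by elim: s => /= [|x s' ->]; lra. Qed.

Lemma sum_seq_sub f g : sum_seq s (fun x => f x - g x) = sum_seq s f - sum_seq s g.
Proof. by elim: s => /= [|x s' ->]; lra. Qed.

Lemma sum_seq_scale c f : sum_seq s (fun x => c * f x) = c * sum_seq s f.
Proof. by elim: s => /= [|x s' ->]; lra. Qed.

Lemma sum_seq_ge0 f : (forall x, 0 <= f x) -> 0 <= sum_seq s f.
Proof. by move=> Hf; elim: s => /= [|x s' IH]; [lra | have := Hf x; lra]. Qed.

Lemma Rabs_sum_seq_le f g : (forall x, Rabs (f x) <= g x) -> Rabs (sum_seq s f) <= sum_seq s g.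
Proof.
  move=> Hfg; elim: s => /= [|x s' IH]; first by rewrite Rabs_R0; lra.
  by apply: (Rle_trans _ _ _ (Rabs_triang _ _)); have := Hfg x; lra.
Qed.

Lemma sum_seq_cv (u : nat -> T -> R) (l : T -> R) :
  (forall x, Un_cv (fun n => u n x) (l x)) -> Un_cv (fun n => sum_seq s (u n)) (sum_seq s l).
Proof.
  move=> Hu; elim: s => /= [|x s' IH]; last exact: CV_plus.
  by move=> eps He; exists 0%nat => n _; rewrite /R_dist Rminus_0_r Rabs_R0.
Qed.

Lemma sum_seq_continuity (F : T -> R -> R) (x : T -> R) :
  (forall t, continuity_pt (F t) (x t)) -> forall eps, 0 < eps ->
  exists al, 0 < al /\ forall y : T -> R, (forall t, Rabs (y t - x t) < al) ->
    Rabs (sum_seq s (fun t => F t (y t)) - sum_seq s (fun t => F t (x t))) < eps.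
Proof.
  move=> HF; elim: s => /= [|t s' IH] eps He.
    by exists 1; split; [lra | move=> y _; rewrite Rminus_0_r Rabs_R0].
  have [al1 [Hal1 Ht]] := HF t (eps / 2) ltac:(lra).
  have [al2 [Hal2 Hs']] := IH (eps / 2) ltac:(lra).
  exists (Rmin al1 al2); split; first exact: Rmin_pos.
  move=> y Hy; move: (Rmin_l al1 al2) (Rmin_r al1 al2) => Hm1 Hm2.
  have Hts : Rabs (F t (y t) - F t (x t)) < eps / 2.
    have [->|Hne] := Req_dec (y t) (x t); first by rewrite Rminus_diag Rabs_R0; lra.
    apply: Ht; split; first by split; [|apply: not_eq_sym].
    by have := Hy t; rewrite /= /R_dist; lra.
  have := Hs' y (fun t' => Rlt_le_trans _ _ _ (Hy t') Hm2).
  set A := sum_seq _ _; set B := sum_seq _ _ => HAB.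
  apply: (Rle_lt_trans _ (Rabs (F t (y t) - F t (x t)) + Rabs (A - B))); last lra.
  by rewrite (_ : _ + A - _ = (F t (y t) - F t (x t)) + (A - B)); [apply: Rabs_triang | ring].
Qed.

End SumSeq.

Lemma sum_seq_ge_term (T : eqType) (s : seq T) f x :
  (forall y, 0 <= f y) -> x \in s -> f x <= sum_seq s f.
Proof.
  move=> Hf; elim: s => //= y s' IH; rewrite in_cons => /orP [/eqP <-|Hx].
    by have := sum_seq_ge0 s' _ Hf; lra.
  by have := IH Hx; have := Hf y; lra.
Qed.

Lemma sum_enum_ge_term (T : finType) (f : T -> R) x :
  (forall y, 0 <= f y) -> f x <= sum_seq (enum T) f.
Proof. by move=> Hf; apply: sum_seq_ge_term; last rewrite mem_enum. Qed.

Lemma sum_seq_indicator (T : eqType) (s : seq T) x f : uniq s -> x \in s ->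
  sum_seq s (fun y => (if y == x then 1 else 0) * f y) = f x.
Proof.
  elim: s => //= y s' IH /andP [Hy Hu]; rewrite in_cons.
  case: (eqVneq y x) => [<- _|Hne /= Hx]; last by rewrite IH //; lra.
  suff -> : sum_seq s' (fun z => (if z == y then 1 else 0) * f z) = 0 by lra.
  elim: s' {IH Hu} Hy => //= z s'' IH; rewrite in_cons negb_or => /andP [Hyz Hy].
  by rewrite eq_sym (negbTE Hyz) IH //; lra.
Qed.

Lemma Un_cv_const c : Un_cv (fun _ => c) c.
Proof. by move=> eps He; exists 0%nat => n _; rewrite /R_dist Rminus_diag Rabs_R0. Qed.

Lemma Rabs_le_inv a b : Rabs a <= b -> - b <= a <= b.
Proof. by move=> H; have := Rle_abs a; have := Rle_abs (- a); rewrite Rabs_Ropp; lra. Qed.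

Lemma lt_div_mul a b c : 0 < c -> a < b / c -> a * c < b.
Proof. by move=> Hc /(Rmult_lt_compat_r c _ _ Hc); rewrite /Rdiv Rmult_assoc Rinv_l; lra. Qed.

Lemma Rabs_div_sub_le h a b x : h <> 0 -> h * a <= x <= h * b ->
  Rabs (x / h - b) <= Rabs (a - b).
Proof.
  move=> Hh Hx; have Hq : x = h * (x / h) by field.
  rewrite {}Hq in Hx; move: (x / h) Hx => q Hq.
  have : a <= q <= b \/ b <= q <= a.
    by have [?|[?|?]] := Rtotal_order h 0; [right; nra | contradiction | left; nra].
  case=> Hab; [rewrite Rabs_minus_sym (Rabs_minus_sym a)|]; rewrite !Rabs_pos_eq; lra.
Qed.

Section Modulus.
Variables (E : finType) (Gamma : seq E -> Prop) (p : R).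
Hypothesis p_gt1 : 1 < p.
Hypothesis Gamma_nonnil : forall g, Gamma g -> g <> [::].
Implicit Types (s eta r rs : E -> R).

Lemma rho_lenE r g : rho_len r g = sum_seq g r.
Proof. by []. Qed.

Lemma energyE s r : energy p s r = sum_seq (enum E) (fun e => s e * rpow (Rabs (r e)) p).
Proof. by []. Qed.

Lemma energy_ge0 s r : (forall e, 0 <= s e) -> 0 <= energy p s r.
Proof. by move=> Hs; apply: sum_seq_ge0 => e; apply: Rmult_le_pos; [exact: Hs | exact: rpow_ge0]. Qed.

Lemma energy_term_le s r e : (forall e, 0 <= s e) -> s e * rpow (Rabs (r e)) p <= energy p s r.
Proof.
  move=> Hs; apply: sum_enum_ge_term => e'.
  by apply: Rmult_le_pos; [exact: Hs | exact: rpow_ge0].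
Qed.

Lemma energy_shift s eta h r :
  energy p (fun e => s e + h * eta e) r = energy p s r + h * energy p eta r.
Proof. by rewrite !energyE -sum_seq_scale -sum_seq_add; apply: sum_seq_ext => e; ring. Qed.

Lemma Rabs_energy_le s eta r M : (forall e, Rabs (eta e) <= M * s e) ->
  Rabs (energy p eta r) <= M * energy p s r.
Proof.
  move=> Hdom; rewrite !energyE -sum_seq_scale; apply: Rabs_sum_seq_le => e.
  rewrite Rabs_mult (Rabs_pos_eq (rpow _ _)) ?Rmult_assoc -?(Rmult_assoc M); last exact: rpow_ge0.
  by apply: Rmult_le_compat_r; [exact: rpow_ge0 | exact: Hdom].
Qed.

Lemma energy_cv s (r : nat -> E -> R) l : (forall e, Un_cv (fun n => r n e) (l e)) ->
  Un_cv (fun n => energy p s (r n)) (energy p s l).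
Proof.
  move=> Hrl; apply: (sum_seq_cv (enum E) (fun n e => s e * rpow (Rabs (r n e)) p)) => e.
  apply: CV_mult; first exact: Un_cv_const.
  apply: (continuity_seq (fun x => rpow (Rabs x) p)) => //.
  apply: (continuity_pt_comp Rabs (fun x => rpow x p)); first exact: Rcontinuity_abs.
  by apply: continuity_pt_rpow; lra.
Qed.

Lemma energy_continuity eta rs eps : 0 < eps -> exists al, 0 < al /\
  forall r, (forall e, Rabs (r e - rs e) < al) -> Rabs (energy p eta r - energy p eta rs) < eps.
Proof.
  apply: (sum_seq_continuity (enum E) (fun e x => eta e * rpow (Rabs x) p)) => e.
  apply: (continuity_pt_mult (fun _ => eta e)); first exact: continuity_pt_const.
  apply: (continuity_pt_comp Rabs (fun x => rpow x p)); first exact: Rcontinuity_abs.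
  by apply: continuity_pt_rpow; lra.
Qed.

Lemma admissible_one : admissible Gamma (fun _ => 1).
Proof.
  split=> [e | [|e g] Hg]; [lra | by have := Gamma_nonnil _ Hg |].
  by rewrite rho_lenE /=; have := sum_seq_ge0 g (fun _ => 1) (fun _ => Rle_0_1); lra.
Qed.

Lemma admissible_midpoint r1 r2 : admissible Gamma r1 -> admissible Gamma r2 ->
  admissible Gamma (fun e => (r1 e + r2 e) / 2).
Proof.
  move=> [P1 L1] [P2 L2]; split=> [e | g Hg]; first by have := P1 e; have := P2 e; lra.
  have := L1 g Hg; have := L2 g Hg; rewrite !rho_lenE.
  have -> : sum_seq g (fun e => (r1 e + r2 e) / 2) = / 2 * (sum_seq g r1 + sum_seq g r2).
    by rewrite -sum_seq_add -sum_seq_scale; apply: sum_seq_ext => e; field.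
  lra.
Qed.

Lemma admissible_limit (r : nat -> E -> R) l : (forall n, admissible Gamma (r n)) ->
  (forall e, Un_cv (fun n => r n e) (l e)) -> admissible Gamma l.
Proof.
  move=> Ar Hrl; split=> [e | g Hg].
  - apply: (@Rle_cv_lim (fun _ => 0) (fun n => r n e)); last exact: Hrl.
      by move=> n; case: (Ar n).
    exact: Un_cv_const.
  - apply: (@Rle_cv_lim (fun _ => 1) (fun n => rho_len (r n) g)); last exact: sum_seq_cv.
      by move=> n; case: (Ar n) => _; apply.
    exact: Un_cv_const.
Qed.

Lemma Mod_is_glb s : (forall e, 0 <= s e) ->
  is_glb (fun x => exists rho, admissible Gamma rho /\ x = energy p s rho) (Mod Gamma p s).
Proof.
  move=> Hs; apply: epsilon_spec.
  set S := fun x => exists rho, admissible Gamma rho /\ - x = energy p s rho.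
  have S_bound : bound S by exists 0 => x [rho [_ Hx]]; have := energy_ge0 _ rho Hs; lra.
  have S_inhabited : exists x, S x.
    by exists (- energy p s (fun _ => 1)), (fun _ => 1); split; [exact: admissible_one | lra].
  have [m [Hub Hlub]] := completeness S S_bound S_inhabited.
  exists (- m); split=> [x [rho [Ar ->]] | y Hy].
  - suff : - energy p s rho <= m by lra.
    by apply: Hub; exists rho; split; [|lra].
  - suff : m <= - y by lra.
    by apply: Hlub => x [rho [Ar Hx]]; have := Hy (- x) (ex_intro _ rho (conj Ar Hx)); lra.
Qed.

Lemma Mod_le_energy s r : (forall e, 0 <= s e) -> admissible Gamma r -> Mod Gamma p s <= energy p s r.
Proof. by move=> Hs Ar; apply: (Mod_is_glb _ Hs).1; exists r. Qed.

Lemma Mod_ge0 s : (forall e, 0 <= s e) -> 0 <= Mod Gamma p s.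
Proof. by move=> Hs; apply: (Mod_is_glb _ Hs).2 => _ [r [_ ->]]; exact: energy_ge0. Qed.

Lemma Mod_approx s th : (forall e, 0 <= s e) -> 0 < th ->
  exists r, admissible Gamma r /\ energy p s r <= Mod Gamma p s + th.
Proof.
  move=> Hs Hth; apply: NNPP => Hno.
  suff : Mod Gamma p s + th <= Mod Gamma p s by lra.
  apply: (Mod_is_glb _ Hs).2 => _ [r [Ar ->]]; apply: Rnot_lt_le => Hlt.
  by apply: Hno; exists r; split; [|lra].
Qed.

Lemma midpoint_gap_le_energy_excess s r1 r2 e : (forall e, 0 <= s e) ->
  admissible Gamma r1 -> admissible Gamma r2 ->
  s e * midpoint_gap p (r1 e) (r2 e) <= (energy p s r1 + energy p s r2) / 2 - Mod Gamma p s.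
Proof.
  move=> Hs A1 A2; have [P1 _] := A1; have [P2 _] := A2.
  set mid := fun e => (r1 e + r2 e) / 2.
  have Hmod := Mod_le_energy _ mid Hs (admissible_midpoint _ _ A1 A2).
  have Hsplit : energy p s r1 + energy p s r2 - 2 * energy p s mid
              = 2 * sum_seq (enum E) (fun e => s e * midpoint_gap p (r1 e) (r2 e)).
    rewrite !energyE -sum_seq_add -!(sum_seq_scale (enum E) 2) -sum_seq_sub.
    apply: sum_seq_ext => e'; rewrite /mid !Rabs_pos_eq; try (have := P1 e'; have := P2 e'; lra).
    rewrite /midpoint_gap; field.
  have : s e * midpoint_gap p (r1 e) (r2 e) <= sum_seq (enum E) (fun e => s e * midpoint_gap p (r1 e) (r2 e)).
    apply: sum_enum_ge_term => e'.
    by apply: Rmult_le_pos; [exact: Hs | exact: midpoint_gap_ge0].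
  lra.
Qed.

Lemma dominated_by_weight s f : (forall e, 0 < s e) ->
  exists M, 0 < M /\ forall e, Rabs (f e) <= M * s e.
Proof.
  move=> Hs; set M := sum_seq (enum E) (fun e => Rabs (f e) / s e) + 1.
  have Hq e : 0 <= Rabs (f e) / s e.
    by apply: Rmult_le_pos; [exact: Rabs_pos | left; apply: Rinv_0_lt_compat].
  have Hterm e : Rabs (f e) / s e <= M - 1.
    by rewrite /M; have := sum_enum_ge_term _ _ e Hq; lra.
  exists M; split=> [|e]; first by have := sum_seq_ge0 (enum E) _ Hq; rewrite /M; lra.
  have Hse := Hs e; rewrite -(Rmult_1_l (Rabs (f e))) -(Rinv_r (s e)); last lra.
  by have := Hterm e; have := Hq e; rewrite /Rdiv; nra.
Qed.

Lemma near_minimizers_close s eps : (forall e, 0 < s e) -> 0 < eps ->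
  exists d, 0 < d /\ forall r1 r2, admissible Gamma r1 -> admissible Gamma r2 ->
    energy p s r1 <= Mod Gamma p s + d -> energy p s r2 <= Mod Gamma p s + d ->
    forall e, Rabs (r1 e - r2 e) < eps.
Proof.
  move=> Hs He; have Hs0 e : 0 <= s e by left.
  have [M [HM HMs]] := dominated_by_weight s (fun _ => 1) Hs.
  set m := Mod Gamma p s; have Hm : 0 <= m := Mod_ge0 _ Hs0.
  set K := 1 + (m + 1) * M.
  have [d [Hd Hgap]] := midpoint_gap_uniform p K eps p_gt1 ltac:(rewrite /K; nra) He.
  set d' := Rmin 1 (d / (2 * M)).
  have Hd'1 : d' <= 1 := Rmin_l _ _.
  have Hd'M : M * d' <= d / 2.
    have Hr : d' <= d / (2 * M) := Rmin_r _ _.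
    have -> : d / 2 = M * (d / (2 * M)) by field; lra.
    by apply: Rmult_le_compat_l; lra.
  exists d'; split; first by apply: Rmin_pos; [lra | apply: Rdiv_lt_0_compat; lra].
  move=> r1 r2 A1 A2 E1 E2 e.
  have Hbound r : admissible Gamma r -> energy p s r <= m + d' -> 0 <= r e <= K.
    move=> [Pr _] Er; have Hr := Pr e; split=> //.
    have := energy_term_le s r e Hs0; rewrite Rabs_pos_eq // => Hterm.
    have := le_add1_rpow (r e) p ltac:(lra) Hr; have := rpow_ge0 (r e) p.
    have := HMs e; rewrite Rabs_R1 /K; nra.
  apply: Rnot_le_lt => Hfar.
  have Hg := Hgap _ _ (Hbound r1 A1 E1) (Hbound r2 A2 E2) Hfar.
  have Hmid := midpoint_gap_le_energy_excess s r1 r2 e Hs0 A1 A2.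
  have := HMs e; rewrite Rabs_R1 => HMse.
  have Hlow : d <= M * (s e * midpoint_gap p (r1 e) (r2 e)) by have := Hs e; nra.
  have : s e * midpoint_gap p (r1 e) (r2 e) <= d' by rewrite -/m in Hmid; lra.
  by move/(Rmult_le_compat_l M _ _ (Rlt_le _ _ HM)); lra.
Qed.

Lemma Mod_attained s : (forall e, 0 < s e) ->
  exists r, admissible Gamma r /\ energy p s r = Mod Gamma p s.
Proof.
  move=> Hs; have Hs0 e : 0 <= s e by left.
  have [r Hr] := choice _ (fun n => Mod_approx s (RinvN n) Hs0 (cond_pos (RinvN n))).
  have Hcauchy e : Cauchy_crit (fun n => r n e).
    move=> eps He; have [d [Hd Hclose]] := near_minimizers_close s eps Hs He.
    have [N HN] := RinvN_cv Hd.
    exists N => n k Hn Hk; rewrite /R_dist.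
    have small i : (i >= N)%coq_nat -> RinvN i <= d.
      by move=> Hi; have := HN i Hi; rewrite /R_dist Rminus_0_r Rabs_pos_eq; [lra | left; exact: cond_pos].
    case: (Hr n) => An En; case: (Hr k) => Ak Ek.
    by apply: Hclose => //; [have := small n Hn | have := small k Hk]; lra.
  have [l Hl] := choice _ (fun e => let (l, Hl) := R_complete _ (Hcauchy e) in ex_intro _ l Hl).
  have Al : admissible Gamma l by apply: (admissible_limit r) => // n; case: (Hr n).
  exists l; split=> //; apply Rle_antisym; [| exact: Mod_le_energy s l Hs0 Al].
  apply: (@Rle_cv_lim (fun n => energy p s (r n)) (fun n => Mod Gamma p s + RinvN n)).
  - by move=> n; case: (Hr n).
  - exact: energy_cv.
  - by rewrite -{2}(Rplus_0_r (Mod Gamma p s)); apply: CV_plus; [exact: Un_cv_const | exact: RinvN_cv].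
Qed.

Lemma extremal_spec s : (forall e, 0 < s e) ->
  admissible Gamma (extremal Gamma p s) /\ energy p s (extremal Gamma p s) = Mod Gamma p s.
Proof. by move=> Hs; rewrite /extremal; apply epsilon_spec; apply: Mod_attained. Qed.

Lemma near_minimizers_energy_close s eta eps : (forall e, 0 < s e) -> 0 < eps ->
  exists th, 0 < th /\ forall r, admissible Gamma r -> energy p s r <= Mod Gamma p s + th ->
    Rabs (energy p eta r - energy p eta (extremal Gamma p s)) < eps.
Proof.
  move=> Hs He; have [Ars Ers] := extremal_spec s Hs.
  have [al [Hal Hcont]] := energy_continuity eta (extremal Gamma p s) eps He.
  have [th [Hth Hclose]] := near_minimizers_close s al Hs Hal.
  exists th; split=> // r Ar Er; apply: Hcont => e.
  by apply: Hclose => //; lra.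
Qed.

Lemma Mod_shift_eq s eta h : (forall e, 0 < s e + h * eta e) ->
  Mod Gamma p (fun e => s e + h * eta e)
  = energy p s (extremal Gamma p (fun e => s e + h * eta e))
    + h * energy p eta (extremal Gamma p (fun e => s e + h * eta e)).
Proof. by move=> Hsh; have [_ <-] := extremal_spec _ Hsh; exact: energy_shift. Qed.

Lemma Mod_shift_le s eta h : (forall e, 0 < s e) -> (forall e, 0 <= s e + h * eta e) ->
  Mod Gamma p (fun e => s e + h * eta e) <= Mod Gamma p s + h * energy p eta (extremal Gamma p s).
Proof.
  move=> Hs Hsh; have [Ars <-] := extremal_spec s Hs.
  by rewrite -energy_shift; apply: Mod_le_energy.
Qed.

Lemma shifted_weight_pos s eta h M : (forall e, 0 < s e) ->
  (forall e, Rabs (eta e) <= M * s e) -> Rabs h * M <= / 2 ->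
  forall e, 0 < s e + h * eta e.
Proof.
  move=> Hs Hdom HhM e; have Hse := Hs e.
  have : Rabs (h * eta e) <= / 2 * s e.
    rewrite Rabs_mult Rmult_comm (Rmult_comm (/ 2)).
    have : Rabs (eta e) * Rabs h <= M * s e * Rabs h by apply: Rmult_le_compat_r; [exact: Rabs_pos | exact: Hdom].
    nra.
  by move/Rabs_le_inv; lra.
Qed.

Lemma extremal_shift_excess s eta h M : (forall e, 0 < s e) ->
  (forall e, Rabs (eta e) <= M * s e) -> 0 <= M -> Rabs h <= 1 -> Rabs h * M <= / 2 ->
  energy p s (extremal Gamma p (fun e => s e + h * eta e))
    <= Mod Gamma p s + Rabs h * (Rabs (energy p eta (extremal Gamma p s))
         + 2 * M * (Mod Gamma p s + Rabs (energy p eta (extremal Gamma p s)))).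
Proof.
  move=> Hs Hdom HM Hh1 HhM; have Hs0 e : 0 <= s e by left.
  set D := Rabs (energy p eta (extremal Gamma p s)).
  have Hpos := shifted_weight_pos s eta h M Hs Hdom HhM.
  set F := Mod Gamma p s; set r := extremal Gamma p _.
  have := Mod_shift_eq s eta h Hpos; have := Mod_shift_le s eta h Hs (fun e => Rlt_le _ _ (Hpos e)).
  rewrite -/F -/r => Hle Heq.
  have HE : 0 <= energy p s r := energy_ge0 _ _ Hs0.
  have HF : 0 <= F := Mod_ge0 _ Hs0.
  have /Rabs_le_inv Hr : Rabs (h * energy p eta r) <= Rabs h * (M * energy p s r).
    by rewrite Rabs_mult; apply: Rmult_le_compat_l; [exact: Rabs_pos | exact: Rabs_energy_le].
  have /Rabs_le_inv Hrs : Rabs (h * energy p eta (extremal Gamma p s)) <= Rabs h * D.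
    by rewrite Rabs_mult -/D; lra.
  have HhD : Rabs h * D <= D by rewrite -{2}(Rmult_1_l D); apply: Rmult_le_compat_r; [exact: Rabs_pos|].
  have HhME : Rabs h * (M * energy p s r) <= / 2 * energy p s r.
    by rewrite -Rmult_assoc; apply: Rmult_le_compat_r.
  (* absorbing [h * energy eta r] into the left-hand side gives [energy s r <= 2 (F + D)] *)
  have HEC : M * energy p s r <= M * (2 * (F + D)) by apply: Rmult_le_compat_l; lra.
  have := Rmult_le_compat_l _ _ _ (Rabs_pos h) HEC.
  have : Rabs h * (D + 2 * M * (F + D)) = Rabs h * D + Rabs h * (M * (2 * (F + D))) by ring.
  lra.
Qed.

Lemma extremal_shift_near_minimal s eta th : (forall e, 0 < s e) -> 0 < th ->
  exists al, 0 < al /\ forall h, Rabs h < al ->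
    (forall e, 0 < s e + h * eta e) /\
    energy p s (extremal Gamma p (fun e => s e + h * eta e)) <= Mod Gamma p s + th.
Proof.
  move=> Hs Hth; have [M [HM Hdom]] := dominated_by_weight s eta Hs.
  set D := Rabs (energy p eta (extremal Gamma p s)).
  set K := D + 2 * M * (Mod Gamma p s + D) + 1.
  have HK : 0 < K.
    by have := Mod_ge0 s (fun e => Rlt_le _ _ (Hs e)); have := Rabs_pos (energy p eta (extremal Gamma p s)); rewrite /K -/D; nra.
  exists (Rmin (1 / (2 * (M + 1))) (th / K)); split.
    by apply: Rmin_pos; apply: Rdiv_lt_0_compat; lra.
  move=> h /Rmin_Rgt [/(lt_div_mul _ _ (2 * (M + 1)) ltac:(lra)) HhM /(lt_div_mul _ _ _ HK) HhK].
  have Hh : 0 <= Rabs h := Rabs_pos h.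
  have HhM0 : 0 <= Rabs h * M by apply: Rmult_le_pos; lra.
  have : Rabs h * (2 * (M + 1)) = 2 * (Rabs h * M) + 2 * Rabs h by ring.
  move=> Hexp; have HhM' : Rabs h * M <= / 2 by lra.
  split; first exact: (shifted_weight_pos s eta h M Hs Hdom).
  have := extremal_shift_excess s eta h M Hs Hdom (Rlt_le _ _ HM) ltac:(lra) HhM'.
  rewrite -/D; have : Rabs h * K = Rabs h * (D + 2 * M * (Mod Gamma p s + D)) + Rabs h.
    by rewrite /K; ring.
  lra.
Qed.

Lemma Mod_derivative s eta : (forall e, 0 < s e) ->
  limit1_in (fun h => (Mod Gamma p (fun e => s e + h * eta e) - Mod Gamma p s) / h)
    (fun h => h <> 0) (energy p eta (extremal Gamma p s)) 0.
Proof.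
  move=> Hs eps He; have Hs0 e : 0 <= s e by left.
  have [th [Hth Hstable]] := near_minimizers_energy_close s eta eps Hs He.
  have [al [Hal Hnear]] := extremal_shift_near_minimal s eta th Hs Hth.
  exists al; split=> // h [Hh0 Hh]; rewrite /= /R_dist Rminus_0_r in Hh *.
  have [Hpos Hmin] := Hnear h Hh; set r := extremal Gamma p _ in Hmin.
  have [Ar _] := extremal_spec _ Hpos.
  have Henvelope : h * energy p eta r <= Mod Gamma p (fun e => s e + h * eta e) - Mod Gamma p s
                   <= h * energy p eta (extremal Gamma p s).
    have := Mod_shift_le s eta h Hs (fun e => Rlt_le _ _ (Hpos e)).
    have := Mod_le_energy s r Hs0 Ar.
    by rewrite Mod_shift_eq // -/r; lra.
  exact: Rle_lt_trans (Rabs_div_sub_le _ _ _ _ Hh0 Henvelope) (Hstable r Ar Hmin).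
Qed.

End Modulus.

Theorem mainTheorem14
  (V E : finType) (trav : E -> V -> V -> bool)
  (Gamma : seq E -> Prop)
  (HGwalks : forall g, Gamma g -> is_walk trav g)
  (HGne : exists g, Gamma g)
  (p : R) (Hp : 1 < p)
  (sigma : E -> R) (Hsigma : forall e, 0 < sigma e) :
  (forall eta : E -> R,
     limit1_in
       (fun h => (Mod Gamma p (fun e => sigma e + h * eta e) - Mod Gamma p sigma) / h)
       (fun h => 0 < h)
       (sumE (fun e => eta e * rpow (extremal Gamma p sigma e) p))
       0) /\
  (forall e0 : E,
     limit1_in
       (fun h => (Mod Gamma p (fun e => if e == e0 then sigma e + h else sigma e)
                  - Mod Gamma p sigma) / h)
       (fun h => h <> 0)
       (rpow (extremal Gamma p sigma e0) p)
       0).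
Proof.
  have Gamma_nonnil g : Gamma g -> g <> [::] by case/HGwalks.
  have deriv := Mod_derivative E Gamma p Hp Gamma_nonnil sigma _ Hsigma.
  have [[Pext _] _] := extremal_spec E Gamma p Hp Gamma_nonnil sigma Hsigma.
  have extremal_energy eta :
      sumE (fun e => eta e * rpow (extremal Gamma p sigma e) p) = energy p eta (extremal Gamma p sigma).
    by apply: sum_seq_ext => e; rewrite Rabs_pos_eq.
  split=> [eta | e0].
  - rewrite extremal_energy; apply: limit1_imp (deriv eta) => h; lra.
  - set ind := fun e => if e == e0 then 1 else 0.
    have -> : rpow (extremal Gamma p sigma e0) p = sumE (fun e => ind e * rpow (extremal Gamma p sigma e) p).
      by rewrite /sumE -/(sum_seq _ _) sum_seq_indicator ?enum_uniq ?mem_enum.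
    rewrite extremal_energy; apply: limit1_ext (deriv ind) => h _.
    by do 3 f_equal; apply: functional_extensionality => e; rewrite /ind; case: (e == e0); lra.
Qed.
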